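(* For $1\le\sigma\le2$ and $t\ge 500$, $$|\zeta(\sigma+it)|<\log t-0.14.$$
   Context: $\zeta$ denotes the Riemann zeta function. *)

From Stdlib Require Import Reals.
From Coquelicot Require Import Coquelicot.
Open Scope R_scope.

Definition cpow (x : R) (s : C) : C :=
  (Rpower x (Re s) * cos (Im s * ln x), Rpower x (Re s) * sin (Im s * ln x)).

Definition zeta_approx (s : C) (N : nat) : C :=
  Cminus (sum_n (fun k => cpow (INR (S k)) (Copp s)) N)
         (Cdiv (cpow (INR (S N)) (Cminus 1 s)) (Cminus 1 s)).

(* Riemann zeta function on Re s > 0, s <> 1 (analytic continuation):
   zeta(s) = lim_{N -> oo} ( sum_{n <= N} n^{-s} - N^{1-s}/(1-s) ).
   For Re s > 1 this is the Dirichlet series sum n^{-s}. *)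
Definition zeta (s : C) : C :=
  (real (Lim_seq (fun N => Re (zeta_approx s N))),
   real (Lim_seq (fun N => Im (zeta_approx s N)))).

(* Write s = sigma + i t and fix a unit vector u = p + i q.  With
   G(x) = Re (u x^(-s)) and H(x) = Re (u x^(1-s) / (1 - s)) we have H' = G, and the
   approximant of zeta satisfies Re (u zeta_M(s)) = G(1) + ... + G(M+1) - H(M+1).
   Split the sum at n ~ t/5.  The first n terms are at most 1/k each, which gives
   1 + ln (n + 1/2) - ln (3/2).  Every later G(k) is compared with H(k + 1/2) - H(k - 1/2)
   by the midpoint rule; as |G''(x)| <= (t^2 + 9) x^(-3), these errors add up to at most
   (t^2 + 9) / (48 n^2) ~ 0.52, and the remaining boundary term -H(n + 1/2) is at most 1/t.
   For t >= 500 the total is below ln t - 0.14, and |zeta(s)| is the supremum of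
   Re (u zeta(s)) over all unit vectors u. *)

From Stdlib Require Import Reals Lra Lia.
From Coquelicot Require Import Coquelicot.
Open Scope R_scope.

Lemma increment_le_of_derive_le (f g df dg : R -> R) (a b : R) :
  a <= b ->
  (forall x, a <= x <= b -> is_derive f x (df x)) ->
  (forall x, a <= x <= b -> is_derive g x (dg x)) ->
  (forall x, a <= x <= b -> df x <= dg x) ->
  f b - f a <= g b - g a.
Proof.
  intros Hab Hf Hg Hle.
  assert (Hd : forall x, a <= x <= b -> is_derive (fun y => g y - f y) x (dg x - df x)).
  { intros x Hx. apply (is_derive_minus g f); auto. }
  destruct (MVT_gen (fun y => g y - f y) a b (fun x => dg x - df x)) as [c [Hc Hmvt]];
    rewrite ?Rmin_left, ?Rmax_right in * by lra.
  - intros x Hx. apply Hd; lra.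
  - intros x Hx. apply derivable_continuous_pt.
    eexists. apply is_derive_Reals, Hd; lra.
  - specialize (Hle c Hc). nra.
Qed.

Lemma Rabs_increment_le_of_derive (f g df dg : R -> R) (a b : R) :
  a <= b ->
  (forall x, a <= x <= b -> is_derive f x (df x)) ->
  (forall x, a <= x <= b -> is_derive g x (dg x)) ->
  (forall x, a <= x <= b -> Rabs (df x) <= dg x) ->
  Rabs (f b - f a) <= g b - g a.
Proof.
  intros Hab Hf Hg Hle. apply Rabs_le. split.
  - enough (- f b - - f a <= g b - g a) by lra.
    apply (increment_le_of_derive_le (fun x => - f x) g (fun x => - df x) dg); auto.
    + intros x Hx. apply (is_derive_opp f); auto.
    + intros x Hx. specialize (Hle x Hx). apply Rabs_le_between in Hle. lra.
  - apply (increment_le_of_derive_le f g df dg); auto.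
    intros x Hx. specialize (Hle x Hx). apply Rabs_le_between in Hle. lra.
Qed.

Lemma is_derive_sym_add (F f : R -> R) (c z : R) :
  is_derive F (c + z) (f (c + z)) -> is_derive F (c - z) (f (c - z)) ->
  is_derive (fun y => F (c + y) + F (c - y)) z (f (c + z) - f (c - z)).
Proof.
  intros Hp Hm. evar (d : R). replace (f (c + z) - f (c - z)) with d.
  - apply (is_derive_plus (fun y => F (c + y)) (fun y => F (c - y))).
    + apply (is_derive_comp F (fun y => c + y)); [exact Hp|auto_derive; auto].
    + apply (is_derive_comp F (fun y => c - y)); [exact Hm|auto_derive; auto].
  - unfold d, plus, scal; simpl; unfold mult; simpl. ring.
Qed.

Lemma is_derive_sym_sub (F f : R -> R) (c z : R) :
  is_derive F (c + z) (f (c + z)) -> is_derive F (c - z) (f (c - z)) ->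
  is_derive (fun y => F (c + y) - F (c - y)) z (f (c + z) + f (c - z)).
Proof.
  intros Hp Hm. evar (d : R). replace (f (c + z) + f (c - z)) with d.
  - apply (is_derive_minus (fun y => F (c + y)) (fun y => F (c - y))).
    + apply (is_derive_comp F (fun y => c + y)); [exact Hp|auto_derive; auto].
    + apply (is_derive_comp F (fun y => c - y)); [exact Hm|auto_derive; auto].
  - unfold d, minus, plus, opp, scal; simpl; unfold mult; simpl. ring.
Qed.

Section MidpointRule.

Variables (F f f1 f2 : R -> R) (c h M : R).
Hypothesis h_ge0 : 0 <= h.
Hypothesis F_derive : forall x, c - h <= x <= c + h -> is_derive F x (f x).
Hypothesis f_derive : forall x, c - h <= x <= c + h -> is_derive f x (f1 x).
Hypothesis f1_derive : forall x, c - h <= x <= c + h -> is_derive f1 x (f2 x).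
Hypothesis f2_bound : forall x, c - h <= x <= c + h -> Rabs (f2 x) <= M.

Lemma midpoint_odd_part_le y : 0 <= y <= h ->
  Rabs (f1 (c + y) - f1 (c - y)) <= 2 * M * y.
Proof.
  intros Hy.
  replace (2 * M * y) with (M * (c + y) - M * (c - y)) by ring.
  apply (Rabs_increment_le_of_derive f1 (fun x => M * x) f2 (fun _ => M)); [lra| | |].
  - intros x Hx. apply f1_derive; lra.
  - intros x Hx. auto_derive; auto; ring.
  - intros x Hx. apply f2_bound; lra.
Qed.

Lemma midpoint_even_part_le y : 0 <= y <= h ->
  Rabs (f (c + y) + f (c - y) - 2 * f c) <= M * y ^ 2.
Proof.
  intros Hy.
  replace (2 * f c) with (f (c + 0) + f (c - 0)) by (rewrite Rplus_0_r, Rminus_0_r; ring).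
  replace (M * y ^ 2) with (M * y ^ 2 - M * 0 ^ 2) by ring.
  apply (Rabs_increment_le_of_derive (fun z => f (c + z) + f (c - z)) (fun z => M * z ^ 2)
           (fun z => f1 (c + z) - f1 (c - z)) (fun z => 2 * M * z)); [lra| | |].
  - intros z Hz. apply is_derive_sym_add; apply f_derive; lra.
  - intros z Hz. auto_derive; auto; ring.
  - intros z Hz. apply midpoint_odd_part_le; lra.
Qed.

Lemma midpoint_rule_error :
  Rabs (F (c + h) - F (c - h) - 2 * h * f c) <= M * h ^ 3 / 3.
Proof.
  replace (F (c + h) - F (c - h) - 2 * h * f c)
    with ((F (c + h) - F (c - h) - 2 * h * f c) - (F (c + 0) - F (c - 0) - 2 * 0 * f c))
    by (rewrite Rplus_0_r, Rminus_0_r; ring).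
  replace (M * h ^ 3 / 3) with (M * h ^ 3 / 3 - M * 0 ^ 3 / 3) by field.
  apply (Rabs_increment_le_of_derive
    (fun z => F (c + z) - F (c - z) - 2 * z * f c) (fun z => M * z ^ 3 / 3)
    (fun z => f (c + z) + f (c - z) - 2 * f c) (fun z => M * z ^ 2)); [lra| | |].
  - intros z Hz. evar (d : R). replace (f (c + z) + f (c - z) - 2 * f c) with d.
    + apply (is_derive_minus (fun z => F (c + z) - F (c - z)) (fun z => 2 * z * f c)).
      * apply is_derive_sym_sub; apply F_derive; lra.
      * auto_derive; auto.
    + unfold d, minus, plus, opp; simpl. ring.
  - intros z Hz. auto_derive; auto; field.
  - intros z Hz. apply midpoint_even_part_le; lra.
Qed.

End MidpointRule.

(* osc a A B t x = Re ((A - i B) x^(a + i t)) *)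
Definition osc (a A B t x : R) : R :=
  Rpower x a * (A * cos (t * ln x) + B * sin (t * ln x)).

Lemma is_derive_osc (a A B t x b A' B' : R) : 0 < x ->
  b = a - 1 -> A' = a * A + t * B -> B' = a * B - t * A ->
  is_derive (osc a A B t) x (osc b A' B' t x).
Proof.
  intros Hx -> -> ->. unfold osc, Rpower. auto_derive; auto.
  replace ((a - 1) * ln x) with (a * ln x + - ln x) by ring.
  rewrite exp_plus, exp_Ropp, exp_ln by exact Hx. field. lra.
Qed.

Lemma Rabs_osc_le (a A B t x r : R) : A ^ 2 + B ^ 2 <= r ^ 2 -> 0 <= r ->
  Rabs (osc a A B t x) <= Rpower x a * r.
Proof.
  intros Hr r_ge0. unfold osc.
  rewrite Rabs_mult, (Rabs_right (Rpower x a)) by (left; apply exp_pos).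
  apply Rmult_le_compat_l; [left; apply exp_pos|].
  set (th := t * ln x). pose proof (sin2_cos2 th) as E. unfold Rsqr in E.
  (* Cauchy-Schwarz, via Lagrange's identity *)
  assert ((A * cos th + B * sin th) ^ 2 <= r ^ 2).
  { assert (0 <= (A * sin th - B * cos th) ^ 2) by apply pow2_ge_0. nra. }
  apply Rabs_le. split; nra.
Qed.

Lemma Rpower_le_Rpower_nonpos (x y a b : R) : 1 <= y <= x -> a <= b <= 0 ->
  Rpower x a <= Rpower y b.
Proof.
  intros Hxy Hab. unfold Rpower.
  assert (0 <= ln y) by (rewrite <- ln_1; apply ln_le; lra).
  assert (ln y <= ln x) by (apply ln_le; lra).
  destruct (Rle_lt_or_eq_dec (a * ln x) (b * ln y)) as [Hlt|Heq]; [nra| |].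
  - left; apply exp_increasing, Hlt.
  - rewrite Heq; lra.
Qed.

Lemma sum_n_m_telescoping (a : nat -> R) (m n : nat) : (m <= S n)%nat ->
  sum_n_m (fun k => a k - a (S k)) m n = a m - a (S n).
Proof.
  induction n as [|n IH]; intros Hm.
  - destruct m as [|[|m]]; [rewrite sum_n_n; reflexivity| |lia].
    rewrite sum_n_m_zero by lia. unfold zero; simpl. ring.
  - destruct (Nat.eq_dec m (S (S n))) as [->|Hne].
    + rewrite sum_n_m_zero by lia. unfold zero; simpl. ring.
    + rewrite sum_n_Sm, IH by lia. unfold plus; simpl. ring.
Qed.

Lemma sum_n_m_le_telescoping (u a : nat -> R) (m n : nat) :
  (forall k, (m <= k)%nat -> u k <= a k - a (S k)) -> (m <= S n)%nat ->
  sum_n_m u m n <= a m - a (S n).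
Proof.
  intros Hu. induction n as [|n IH]; intros Hm.
  - destruct m as [|[|m]]; [rewrite sum_n_n; apply Hu; lia| |lia].
    rewrite sum_n_m_zero by lia. unfold zero; simpl. lra.
  - destruct (Nat.eq_dec m (S (S n))) as [->|Hne].
    + rewrite sum_n_m_zero by lia. unfold zero; simpl. lra.
    + rewrite sum_n_Sm by lia. unfold plus; simpl.
      specialize (IH ltac:(lia)). specialize (Hu (S n) ltac:(lia)). lra.
Qed.

Lemma is_series_telescoping (a : nat -> R) (l : R) : is_lim_seq a l ->
  is_series (fun k => a k - a (S k)) (a O - l).
Proof.
  intros Ha. change (is_lim_seq (sum_n (fun k => a k - a (S k))) (a O - l)).
  apply (is_lim_seq_ext (fun n => a O - a (S n))).
  - intros n. symmetry. apply sum_n_m_telescoping. lia.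
  - apply (is_lim_seq_minus' _ _ _ l); [apply is_lim_seq_const|].
    apply (is_lim_seq_incr_1 a l), Ha.
Qed.

Lemma ex_series_of_le_telescoping (u a : nat -> R) (m : nat) :
  is_lim_seq a 0 -> (forall k, (m <= k)%nat -> Rabs (u k) <= a k - a (S k)) ->
  ex_series u.
Proof.
  intros Ha Hu. apply (ex_series_incr_n u m).
  apply (@ex_series_le R_AbsRing R_CompleteNormedModule _
           (fun k => a (m + k)%nat - a (S (m + k)))).
  - intros k. apply Hu. lia.
  - exists (a (m + 0)%nat - 0).
    apply (is_series_ext (fun k => a (m + k)%nat - a (m + S k)%nat)).
    + intros k. now rewrite Nat.add_succ_r.
    + apply (is_series_telescoping (fun k => a (m + k)%nat)).
      apply (is_lim_seq_ext (fun k => a (k + m)%nat)); [intros k; f_equal; lia|].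
      now apply is_lim_seq_incr_n.
Qed.

Lemma Re_mul_sum_n (u : C) (f : nat -> C) (n : nat) :
  Re (Cmult u (sum_n f n)) = sum_n (fun k => Re (Cmult u (f k))) n.
Proof.
  induction n as [|n IH]; [now rewrite !sum_O|].
  rewrite !sum_Sn, <- IH. destruct u. simpl. unfold plus; simpl. ring.
Qed.

Lemma Cmod_lt_of_Re_mul_lt (z : C) (B : R) :
  (forall p q, p ^ 2 + q ^ 2 = 1 -> Re (Cmult (p, q) z) < B) -> Cmod z < B.
Proof.
  intros Hz. destruct z as [x y].
  destruct (Req_dec (Cmod (x, y)) 0) as [E|E].
  - rewrite E. apply Cmod_eq_0 in E. injection E as -> ->.
    specialize (Hz 1 0 ltac:(ring)). simpl in Hz. lra.
  - assert (Hr : Cmod (x, y) ^ 2 = x ^ 2 + y ^ 2).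
    { unfold Cmod; simpl fst; simpl snd. rewrite pow2_sqrt; [reflexivity|nra]. }
    specialize (Hz (x / Cmod (x, y)) (- y / Cmod (x, y))).
    simpl in Hz.
    replace (x / Cmod (x, y) * x - - y / Cmod (x, y) * y) with (Cmod (x, y)) in Hz.
    + apply Hz. field_simplify; [|exact E]. rewrite Hr. field. nra.
    + field_simplify; [|exact E]. rewrite <- Hr. field. exact E.
Qed.

Lemma inv_le_ln_midpoint_diff (c : R) : 1 <= c ->
  / c <= ln (c + / 2) - ln (c - / 2).
Proof.
  intros Hc.
  assert (E := increment_le_of_derive_le (fun h => 2 * h / c)
    (fun h => ln (c + h) - ln (c - h)) (fun _ => 2 / c)
    (fun h => / (c + h) + / (c - h)) 0 (/ 2)).
  cbv beta in E. rewrite Rplus_0_r, Rminus_0_r, Rminus_diag, Rminus_0_r in E.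
  replace (/ c) with (2 * / 2 / c - 2 * 0 / c) by (field; lra).
  apply E; [lra| | |].
  - intros h Hh. auto_derive; auto. field; lra.
  - intros h Hh. auto_derive; [lra|]. field; lra.
  - intros h Hh.
    replace (/ (c + h) + / (c - h)) with (2 / c + 2 * h ^ 2 / (c * (c + h) * (c - h)))
      by (field; lra).
    assert (0 < c * (c + h) * (c - h)) by (apply Rmult_lt_0_compat; [nra|lra]).
    assert (0 <= 2 * h ^ 2 / (c * (c + h) * (c - h))).
    { apply Rdiv_le_0_compat; [nra|lra]. }
    lra.
Qed.

Lemma inv_cube_le_telescoping (x : R) : 1 <= x ->
  / (x + / 2) ^ 3 <= / (2 * x ^ 2) - / (2 * (x + 1) ^ 2).
Proof.
  intros Hx.
  replace (/ (2 * x ^ 2) - / (2 * (x + 1) ^ 2))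
    with (/ (x + / 2) ^ 3
          + (8 * x ^ 2 + 8 * x + 1) / (2 * x ^ 2 * (x + 1) ^ 2 * (2 * x + 1) ^ 3))
    by (field; repeat split; nra).
  assert (0 < 2 * x ^ 2 * (x + 1) ^ 2 * (2 * x + 1) ^ 3)
    by (repeat apply Rmult_lt_0_compat; try apply pow_lt; lra).
  assert (0 <= (8 * x ^ 2 + 8 * x + 1) / (2 * x ^ 2 * (x + 1) ^ 2 * (2 * x + 1) ^ 3))
    by (apply Rdiv_le_0_compat; nra).
  lra.
Qed.

Lemma is_lim_seq_inv_INR_S : is_lim_seq (fun n => / INR (S n)) 0.
Proof.
  replace (Finite 0) with (Rbar_inv p_infty) by reflexivity.
  apply is_lim_seq_inv; [|discriminate].
  apply (is_lim_seq_incr_1 INR p_infty), is_lim_seq_INR.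
Qed.

Lemma is_lim_seq_inv_2_INR_sq : is_lim_seq (fun n => / (2 * INR n ^ 2)) 0.
Proof.
  replace (Finite 0) with (Rbar_inv p_infty) by reflexivity.
  apply is_lim_seq_inv; [|discriminate].
  apply (is_lim_seq_le_p_loc INR); [|apply is_lim_seq_INR].
  exists 1%nat. intros n Hn. assert (1 <= INR n) by (apply (le_INR 1); lia). nra.
Qed.

Lemma exp_17_10_le : exp (17 / 10) <= 74 / 10.
Proof.
  replace (17 / 10) with (1 + (35 / 100 + 35 / 100)) by field.
  rewrite !exp_plus.
  assert (E : exp (35 / 100) <= 100 / 65).
  { rewrite <- (Rinv_inv (exp (35 / 100))), <- exp_Ropp.
    replace (100 / 65) with (/ (65 / 100)) by field.
    apply Rinv_le_contravar; [lra|].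
    pose proof (exp_ineq1_le (- (35 / 100))). lra. }
  pose proof exp_le_3. pose proof (exp_pos 1). pose proof (exp_pos (35 / 100)).
  assert (exp (35 / 100) * exp (35 / 100) <= 100 / 65 * (100 / 65))
    by (apply Rmult_le_compat; lra).
  assert (exp 1 * (exp (35 / 100) * exp (35 / 100)) <= 3 * (100 / 65 * (100 / 65)))
    by (apply Rmult_le_compat; nra).
  lra.
Qed.

Lemma zeta_bound_numeric (t n : R) : 500 <= t -> n <= t / 5 < n + 1 ->
  1 + ln (n + / 2) - ln (3 / 2) + / t + (t ^ 2 + 9) / 24 * / (2 * n ^ 2)
  < ln t - 0.14.
Proof.
  intros Ht [Hn1 Hn2].
  assert (Hn : 99 <= n) by lra.
  assert (Hln : 17 / 10 <= ln (3 / 2) + ln t - ln (n + / 2)).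
  { rewrite <- ln_mult, <- ln_div by lra.
    rewrite <- (ln_exp (17 / 10)). apply ln_le; [apply exp_pos|].
    eapply Rle_trans; [apply exp_17_10_le|].
    apply Rmult_le_reg_r with (n + / 2); [lra|].
    unfold Rdiv at 2. rewrite Rmult_assoc, Rinv_l by lra. lra. }
  assert (Hinv : / t <= / 500) by (apply Rinv_le_contravar; lra).
  assert (Htail : (t ^ 2 + 9) / 24 * / (2 * n ^ 2) <= 54 / 100).
  { assert (0 < 2 * n ^ 2) by nra.
    apply (Rmult_le_reg_r (2 * n ^ 2)); [assumption|].
    unfold Rdiv. rewrite Rmult_assoc, Rinv_l by lra.
    assert (t <= 5 * n + 5) by lra. nra. }
  lra.
Qed.

Section ZetaApprox.

Variables s t p q : R.
Hypothesis s_range : 1 <= s <= 2.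
Hypothesis t_ge1 : 1 <= t.
Hypothesis pq_unit : p ^ 2 + q ^ 2 = 1.

Definition zeta_term : R -> R := osc (- s) p q t.

Definition zeta_primitive : R -> R :=
  osc (1 - s) ((p * (1 - s) - q * t) / ((1 - s) ^ 2 + t ^ 2))
              ((p * t + q * (1 - s)) / ((1 - s) ^ 2 + t ^ 2)) t.

Let denom_pos : 0 < (1 - s) ^ 2 + t ^ 2.
Proof.
  assert (0 <= (1 - s) ^ 2) by apply pow2_ge_0.
  assert (0 < t ^ 2) by (apply pow_lt; lra).
  lra.
Qed.

Lemma Re_mul_cpow_opp x :
  Re (Cmult (p, q) (cpow x (Copp (s, t)))) = zeta_term x.
Proof.
  unfold cpow, zeta_term, osc; simpl.
  replace (- t * ln x) with (- (t * ln x)) by ring.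
  rewrite cos_neg, sin_neg. ring.
Qed.

Lemma Re_mul_cpow_div x :
  Re (Cmult (p, q) (Cdiv (cpow x (Cminus 1 (s, t))) (Cminus 1 (s, t))))
  = zeta_primitive x.
Proof.
  unfold cpow, zeta_primitive, osc; simpl.
  replace ((0 + - t) * ln x) with (- (t * ln x)) by ring.
  replace (0 + - t) with (- t) by ring.
  rewrite cos_neg, sin_neg. change (1 + - s) with (1 - s). field.
  replace ((1 - s) * (1 - s) + t * t) with ((1 - s) ^ 2 + t ^ 2) by ring. lra.
Qed.

Lemma is_derive_zeta_primitive x : 0 < x ->
  is_derive zeta_primitive x (zeta_term x).
Proof.
  intros Hx. unfold zeta_primitive, zeta_term.
  apply is_derive_osc; [exact Hx|ring|field; lra|field; lra].
Qed.

Lemma Rabs_zeta_term_le x : 1 <= x -> Rabs (zeta_term x) <= / x.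
Proof.
  intros Hx.
  eapply Rle_trans; [apply (Rabs_osc_le _ _ _ _ _ 1); [rewrite pq_unit; simpl|]; lra|].
  replace (/ x) with (Rpower x (- (1))) by (rewrite Rpower_Ropp, Rpower_1; lra).
  rewrite Rmult_1_r. apply Rpower_le_Rpower_nonpos; lra.
Qed.

Lemma Rabs_zeta_primitive_le x : 1 <= x -> Rabs (zeta_primitive x) <= / t.
Proof.
  intros Hx. unfold zeta_primitive.
  eapply Rle_trans; [apply (Rabs_osc_le _ _ _ _ _ (/ t))|].
  - replace (((p * (1 - s) - q * t) / ((1 - s) ^ 2 + t ^ 2)) ^ 2
             + ((p * t + q * (1 - s)) / ((1 - s) ^ 2 + t ^ 2)) ^ 2)
      with ((p ^ 2 + q ^ 2) / ((1 - s) ^ 2 + t ^ 2)) by (field; lra).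
    rewrite pq_unit, pow_inv. unfold Rdiv. rewrite Rmult_1_l.
    apply Rinv_le_contravar; [apply pow_lt; lra|].
    assert (0 <= (1 - s) ^ 2) by apply pow2_ge_0. lra.
  - left; apply Rinv_0_lt_compat; lra.
  - rewrite <- (Rmult_1_l (/ t)) at 2.
    apply Rmult_le_compat_r; [left; apply Rinv_0_lt_compat; lra|].
    apply Rle_trans with (Rpower x 0); [apply Rpower_le_Rpower_nonpos; lra|].
    rewrite Rpower_O; lra.
Qed.

Lemma Rabs_zeta_primitive_incr_le y : 1 <= y ->
  Rabs (zeta_primitive (y + / 2) - zeta_primitive y) <= / (2 * y).
Proof.
  intros Hy.
  replace (/ (2 * y)) with ((y + / 2) / y - y / y) by (field; lra).
  apply (Rabs_increment_le_of_derive _ (fun x => x / y) zeta_term (fun _ => / y));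
    [lra| | |].
  - intros x Hx. apply is_derive_zeta_primitive; lra.
  - intros x Hx. auto_derive; auto. field; lra.
  - intros x Hx. eapply Rle_trans; [apply Rabs_zeta_term_le; lra|].
    apply Rinv_le_contravar; lra.
Qed.

Lemma zeta_midpoint_error c : 3 / 2 <= c ->
  Rabs (zeta_term c - (zeta_primitive (c + / 2) - zeta_primitive (c - / 2)))
  <= (t ^ 2 + 9) / 24 / (c - / 2) ^ 3.
Proof.
  intros Hc.
  set (A1 := - s * p + t * q). set (B1 := - s * q - t * p).
  set (f1 := osc (- s - 1) A1 B1 t).
  set (f2 := osc (- s - 2) ((- s - 1) * A1 + t * B1) ((- s - 1) * B1 - t * A1) t).
  rewrite Rabs_minus_sym.
  replace (zeta_term c) with (2 * / 2 * zeta_term c) by field.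
  replace ((t ^ 2 + 9) / 24 / (c - / 2) ^ 3)
    with ((t ^ 2 + 9) / (c - / 2) ^ 3 * (/ 2) ^ 3 / 3) by (field; lra).
  apply (midpoint_rule_error zeta_primitive zeta_term f1 f2); [lra| | | |].
  - intros x Hx. apply is_derive_zeta_primitive; lra.
  - intros x Hx. apply is_derive_osc; [lra|ring|reflexivity|reflexivity].
  - intros x Hx. apply is_derive_osc; [lra|ring|reflexivity|reflexivity].
  - intros x Hx. unfold f2.
    eapply Rle_trans; [apply (Rabs_osc_le _ _ _ _ _ (t ^ 2 + 9))|].
    + (* each differentiation multiplies the squared amplitude by a ^ 2 + t ^ 2 *)
      replace (((- s - 1) * A1 + t * B1) ^ 2 + ((- s - 1) * B1 - t * A1) ^ 2)
        with (((s + 1) ^ 2 + t ^ 2) * ((s ^ 2 + t ^ 2) * (p ^ 2 + q ^ 2)))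
        by (unfold A1, B1; ring).
      rewrite pq_unit, Rmult_1_r.
      replace ((t ^ 2 + 9) ^ 2) with ((t ^ 2 + 9) * (t ^ 2 + 9)) by ring.
      assert (0 <= t ^ 2) by apply pow2_ge_0.
      assert ((s + 1) ^ 2 <= 3 ^ 2) by (apply pow_incr; lra).
      assert (s ^ 2 <= 3 ^ 2) by (apply pow_incr; lra).
      assert (0 <= s ^ 2) by apply pow2_ge_0.
      apply Rmult_le_compat; lra.
    + assert (0 <= t ^ 2) by apply pow2_ge_0. lra.
    + rewrite Rmult_comm. unfold Rdiv.
      apply Rmult_le_compat_l; [assert (0 <= t ^ 2) by apply pow2_ge_0; lra|].
      replace (/ (c - / 2) ^ 3) with (Rpower (c - / 2) (- INR 3))
        by (rewrite Rpower_Ropp, Rpower_pow; [reflexivity|lra]).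
      apply Rpower_le_Rpower_nonpos; simpl; lra.
Qed.

Let Re_mul_approx (M : nat) : R := Re (Cmult (p, q) (zeta_approx (s, t) M)).

Definition zeta_midpoint_defect (k : nat) : R :=
  zeta_term (INR (S k)) - (zeta_primitive (INR (S k) + / 2) - zeta_primitive (INR k + / 2)).

Lemma Re_mul_zeta_approx M :
  Re_mul_approx M = sum_n (fun k => zeta_term (INR (S k))) M - zeta_primitive (INR (S M)).
Proof.
  unfold Re_mul_approx, zeta_approx.
  assert (Hlin : forall u z z' : C,
    Re (Cmult u (Cminus z z')) = Re (Cmult u z) - Re (Cmult u z')).
  { intros [] [] []. simpl. ring. }
  rewrite Hlin, Re_mul_sum_n, Re_mul_cpow_div.
  f_equal. apply sum_n_ext. intros k. apply Re_mul_cpow_opp.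
Qed.

Lemma sum_n_m_zeta_term m n : (m <= S n)%nat ->
  sum_n_m (fun k => zeta_term (INR (S k))) m n
  = sum_n_m zeta_midpoint_defect m n
    + (zeta_primitive (INR (S n) + / 2) - zeta_primitive (INR m + / 2)).
Proof.
  intros Hmn.
  replace (zeta_primitive (INR (S n) + / 2) - zeta_primitive (INR m + / 2))
    with (- zeta_primitive (INR m + / 2) - - zeta_primitive (INR (S n) + / 2)) by ring.
  rewrite <- (sum_n_m_telescoping (fun k => - zeta_primitive (INR k + / 2))) by exact Hmn.
  rewrite <- (sum_n_m_plus (G := R_AbelianMonoid)). apply sum_n_m_ext. intros k.
  unfold zeta_midpoint_defect, plus; simpl. ring.
Qed.

Lemma Re_mul_zeta_approx_split N M : (N <= M)%nat ->
  Re_mul_approx M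
  = (sum_n (fun k => zeta_term (INR (S k))) N - zeta_primitive (INR (S N) + / 2))
    + sum_n_m zeta_midpoint_defect (S N) M
    + (zeta_primitive (INR (S M) + / 2) - zeta_primitive (INR (S M))).
Proof.
  intros HNM. rewrite Re_mul_zeta_approx. unfold sum_n.
  rewrite (sum_n_m_Chasles _ 0 N M), (sum_n_m_zeta_term (S N) M) by lia.
  change (@plus R_AbelianMonoid) with Rplus. ring.
Qed.

Lemma sum_zeta_term_le N :
  sum_n (fun k => zeta_term (INR (S k))) N <= 1 + ln (INR (S N) + / 2) - ln (3 / 2).
Proof.
  unfold sum_n. rewrite sum_Sn_m by lia. change (@plus R_AbelianMonoid) with Rplus.
  assert (HG : forall k, zeta_term (INR (S k)) <= / INR (S k)).
  { intros k. eapply Rle_trans; [apply Rle_abs|].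
    apply Rabs_zeta_term_le. apply (le_INR 1). lia. }
  assert (H0 : zeta_term (INR 1) <= 1) by (rewrite <- Rinv_1; apply HG).
  assert (Hsum : sum_n_m (fun k => zeta_term (INR (S k))) 1 N
                 <= - ln (INR 1 + / 2) - - ln (INR (S N) + / 2)).
  { apply (sum_n_m_le_telescoping _ (fun k => - ln (INR k + / 2))); [|lia].
    intros k Hk. eapply Rle_trans; [apply HG|].
    assert (Hk1 : 1 <= INR (S k)) by (apply (le_INR 1); lia).
    assert (E := inv_le_ln_midpoint_diff _ Hk1).
    rewrite S_INR in *. replace (INR k + 1 - / 2) with (INR k + / 2) in E by field.
    lra. }
  replace (INR 1 + / 2) with (3 / 2) in Hsum by (simpl; field).
  lra.
Qed.

Let tail_bound (k : nat) : R := (t ^ 2 + 9) / 24 * / (2 * INR k ^ 2).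

Lemma Rabs_zeta_midpoint_defect_le k : (1 <= k)%nat ->
  Rabs (zeta_midpoint_defect k) <= tail_bound k - tail_bound (S k).
Proof.
  intros Hk. assert (Hk1 : 1 <= INR k) by (apply (le_INR 1); lia).
  unfold zeta_midpoint_defect, tail_bound.
  replace (INR k + / 2) with (INR (S k) - / 2) by (rewrite S_INR; field).
  eapply Rle_trans; [apply zeta_midpoint_error; rewrite S_INR; lra|].
  replace (INR (S k) - / 2) with (INR k + / 2) by (rewrite S_INR; field).
  rewrite S_INR, <- Rmult_minus_distr_l. unfold Rdiv at 1.
  apply Rmult_le_compat_l; [assert (0 <= t ^ 2) by apply pow2_ge_0; lra|].
  now apply inv_cube_le_telescoping.
Qed.

Lemma ex_series_zeta_midpoint_defect : ex_series zeta_midpoint_defect.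
Proof.
  apply (ex_series_of_le_telescoping _ tail_bound 1).
  - replace (Finite 0) with (Rbar_mult ((t ^ 2 + 9) / 24) 0) by (simpl; f_equal; ring).
    apply is_lim_seq_scal_l, is_lim_seq_inv_2_INR_sq.
  - apply Rabs_zeta_midpoint_defect_le.
Qed.

Lemma sum_zeta_midpoint_defect_le m n : (1 <= m)%nat -> (m <= S n)%nat ->
  sum_n_m zeta_midpoint_defect m n <= tail_bound m.
Proof.
  intros Hm Hmn.
  assert (0 <= tail_bound (S n)).
  { unfold tail_bound. apply Rmult_le_pos.
    - assert (0 <= t ^ 2) by apply pow2_ge_0. lra.
    - left. apply Rinv_0_lt_compat, Rmult_lt_0_compat; [lra|].
      apply pow_lt, lt_0_INR. lia. }
  enough (sum_n_m zeta_midpoint_defect m n <= tail_bound m - tail_bound (S n)) by lra.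
  apply sum_n_m_le_telescoping; [|assumption].
  intros k Hk. eapply Rle_trans; [apply Rle_abs|].
  apply Rabs_zeta_midpoint_defect_le. lia.
Qed.

Lemma is_lim_seq_zeta_primitive_incr :
  is_lim_seq (fun M => zeta_primitive (INR (S M) + / 2) - zeta_primitive (INR (S M))) 0.
Proof.
  apply is_lim_seq_abs_0.
  apply (is_lim_seq_le_le (fun _ => 0) _ (fun M => / 2 * / INR (S M))).
  - intros M. split; [apply Rabs_pos|].
    rewrite <- Rinv_mult. apply Rabs_zeta_primitive_incr_le.
    apply (le_INR 1). lia.
  - apply is_lim_seq_const.
  - replace (Finite 0) with (Rbar_mult (/ 2) 0) by (simpl; f_equal; ring).
    apply is_lim_seq_scal_l, is_lim_seq_inv_INR_S.
Qed.

Lemma ex_lim_Re_mul_zeta_approx : ex_finite_lim_seq Re_mul_approx.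
Proof.
  destruct ex_series_zeta_midpoint_defect as [l Hl].
  eexists. apply (is_lim_seq_ext (fun M =>
      (sum_n (fun k => zeta_term (INR (S k))) 0 - zeta_primitive (INR 1 + / 2))
      + (sum_n zeta_midpoint_defect M - sum_n zeta_midpoint_defect 0)
      + (zeta_primitive (INR (S M) + / 2) - zeta_primitive (INR (S M))))).
  - intros M. rewrite (Re_mul_zeta_approx_split 0 M) by lia.
    rewrite (@sum_n_m_sum_n R_AbelianGroup) by lia. reflexivity.
  - apply is_lim_seq_plus'; [apply is_lim_seq_plus'|].
    + apply is_lim_seq_const.
    + apply is_lim_seq_minus'; [exact Hl|apply is_lim_seq_const].
    + apply is_lim_seq_zeta_primitive_incr.
Qed.

Lemma Re_mul_zeta_approx_le N M : (N <= M)%nat ->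
  Re_mul_approx M <= 1 + ln (INR (S N) + / 2) - ln (3 / 2) + / t + tail_bound (S N)
         + / 2 * / INR (S M).
Proof.
  intros HNM. rewrite (Re_mul_zeta_approx_split N M HNM).
  assert (Hsum := sum_zeta_term_le N).
  assert (Htail := sum_zeta_midpoint_defect_le (S N) M ltac:(lia) ltac:(lia)).
  assert (HN : 1 <= INR (S N)) by (apply (le_INR 1); lia).
  assert (HM : 1 <= INR (S M)) by (apply (le_INR 1); lia).
  assert (HH := Rabs_zeta_primitive_le (INR (S N) + / 2) ltac:(lra)).
  assert (Hr := Rabs_zeta_primitive_incr_le _ HM).
  rewrite Rinv_mult in Hr.
  apply Rabs_le_between in HH. apply Rabs_le_between in Hr. lra.
Qed.

Lemma Re_mul_zeta_approx_limit_lt : 500 <= t ->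
  exists L : R, is_lim_seq Re_mul_approx L /\ L < ln t - 0.14.
Proof.
  intros Ht.
  destruct ex_lim_Re_mul_zeta_approx as [L HL].
  exists L. split; [exact HL|].
  destruct (nfloor_ex (t / 5)) as [[|N] HN]; [lra|simpl in HN; lra|].
  set (B := 1 + ln (INR (S N) + / 2) - ln (3 / 2) + / t + tail_bound (S N)).
  assert (HLB : Rbar_le L (B + 0)).
  { apply (is_lim_seq_le_loc Re_mul_approx (fun M => B + / 2 * / INR (S M))); [|exact HL|].
    - exists N. intros M HM. now apply Re_mul_zeta_approx_le.
    - apply is_lim_seq_plus'; [apply is_lim_seq_const|].
      replace (Finite 0) with (Rbar_mult (/ 2) 0) by (simpl; f_equal; ring).
      apply is_lim_seq_scal_l, is_lim_seq_inv_INR_S. }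
  unfold Rbar_le in HLB. assert (Hnum := zeta_bound_numeric t (INR (S N)) Ht HN).
  unfold B, tail_bound in HLB. lra.
Qed.

End ZetaApprox.

Theorem proposition7 (sigma t : R) :
  1 <= sigma <= 2 -> 500 <= t ->
  Cmod (zeta (sigma, t)) < ln t - 0.14.
Proof.
  intros Hs Ht.
  assert (Hlim := fun p q Hpq => Re_mul_zeta_approx_limit_lt sigma t p q Hs ltac:(lra) Hpq Ht).
  destruct (Hlim 1 0 ltac:(ring)) as [x [Hx _]].
  destruct (Hlim 0 (-1) ltac:(ring)) as [y [Hy _]].
  assert (Hre : is_lim_seq (fun M => Re (zeta_approx (sigma, t) M)) x).
  { eapply is_lim_seq_ext; [|exact Hx]. intros M; simpl; ring. }
  assert (Him : is_lim_seq (fun M => Im (zeta_approx (sigma, t) M)) y).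
  { eapply is_lim_seq_ext; [|exact Hy]. intros M; simpl; ring. }
  assert (Hzeta : zeta (sigma, t) = (x, y)).
  { unfold zeta. now rewrite (is_lim_seq_unique _ _ Hre), (is_lim_seq_unique _ _ Him). }
  rewrite Hzeta. apply Cmod_lt_of_Re_mul_lt. intros p q Hpq.
  destruct (Hlim p q Hpq) as [L [HL HLt]].
  enough (Finite L = Finite (p * x - q * y)) as E by (injection E; simpl; lra).
  rewrite <- (is_lim_seq_unique _ _ HL). apply is_lim_seq_unique.
  apply is_lim_seq_minus'; apply (is_lim_seq_scal_l _ _ (Finite _)); assumption.
Qed.
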